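(* Let $G\leq\mathrm{Sym}(m)$ and $H\leq\mathrm{Sym}(n)$ both have the EKR property (for their natural actions). Then the wreath product $G\wr H$, acting on $\{1,\dots,m\}\times\{1,\dots,n\}$ by $(x,j)^{(g_1,\dots,g_n,h)}=(g_j(x),h(j))$, has the EKR property.
   Context: The wreath product $G\wr H$ has underlying set $G^n\times H$ with multiplication $(g_1,\dots,g_n,h)(g'_1,\dots,g'_n,h')=(g_1g'_{h(1)},\dots,g_ng'_{h(n)},hh')$. For a permutation group acting on a finite set: two elements $\pi,\tau$ intersect if $\pi\tau^{-1}$ has a fixed point; a subset is intersecting if every pair intersects; the group has the EKR property if every intersecting subset has size at most the size of the largest point-stabilizer. *)

From mathcomp Require Import all_boot all_fingroup.
Set Implicit Arguments. Unset Strict Implicit. Unset Printing Implicit Defensive.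
Local Open Scope group_scope.

(* Permutations act on the right, as in mathcomp: (p * q) x = q (p x). *)

Definition intersect (T : finType) (p q : {perm T}) : bool :=
  [exists x : T, (p * q^-1) x == x].

Definition intersecting (T : finType) (S : {set {perm T}}) : bool :=
  [forall p in S, forall q in S, intersect p q].

Definition EKR (T : finType) (G : {set {perm T}}) : Prop :=
  forall S : {set {perm T}}, S \subset G -> intersecting S ->
    #|S| <= \max_(x : T) #|'C_G[x | 'P]|.

Definition wr_fun m n (g : {ffun 'I_n -> {perm 'I_m}}) (h : {perm 'I_n})
  (p : 'I_m * 'I_n) : 'I_m * 'I_n := (g p.2 p.1, h p.2).

Lemma wr_fun_inj m n g h : injective (@wr_fun m n g h).
Proof.
move=> [x j] [y k] [E1 E2].
have ejk : j = k by exact: (perm_inj E2).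
subst k; congr (_, _); exact: (perm_inj E1).
Qed.

Definition wr_elt m n g h : {perm 'I_m * 'I_n} := perm (@wr_fun_inj m n g h).

Definition wreath m n (G : {set {perm 'I_m}}) (H : {set {perm 'I_n}})
  : {set {perm 'I_m * 'I_n}} :=
  [set wr_elt g h | g in [set g : {ffun 'I_n -> {perm 'I_m}} | [forall j, g j \in G]],
                    h in H].

From mathcomp Require Import all_boot all_fingroup.
Set Implicit Arguments. Unset Strict Implicit. Unset Printing Implicit Defensive.
Local Open Scope group_scope.
Local Open Scope nat_scope.

(* An element of G wr H is a pair (g, h); for a fixed block j0 it is determined
   by h, the ratios g_j g_{j0}^-1 (ranging over |G|^(n-1) values) and the base
   component g_{j0}.  Two intersecting elements have intersecting top components
   h, h', and, when their ratios agree, intersecting base components g_{j0},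
   g'_{j0}.  Hence the EKR property of H and G bounds an intersecting subset of
   G wr H by max_stab G * |G|^(n-1) * max_stab H, which is the order of the
   stabilizer in G wr H of a point (x, j) where x and j have maximal
   stabilizers in G and H. *)

Definition max_stab (T : finType) (G : {set {perm T}}) : nat :=
  \max_(x : T) #|'C_G[x | 'P]|.

Lemma max_stab_cases (T : finType) (G : {set {perm T}}) :
  max_stab G = 0 \/ exists x, max_stab G = #|'C_G[x | 'P]|.
Proof.
rewrite /max_stab.
have [T0 | /(eq_bigmax (fun x => #|'C_G[x | 'P]|)) [x ->]] := posnP #|T|.
  left; apply/eqP; rewrite -leqn0; apply/bigmax_leqP => x _.
  by rewrite (cardD1 x) inE in T0.
by right; exists x.
Qed.

Lemma in_stab_perm (T : finType) (G : {set {perm T}}) x a :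
  (a \in 'C_G[x | 'P]) = (a \in G) && (a x == x).
Proof. by rewrite !inE sub1set inE. Qed.

Lemma intersectE (T : finType) (p q : {perm T}) :
  intersect p q = [exists x, p x == q x].
Proof.
apply: eq_existsb => x; rewrite permM.
by apply/eqP/eqP => [e|->]; rewrite ?permK // -{2}e permKV.
Qed.

Lemma intersectingP (T : finType) (S : {set {perm T}}) :
  reflect {in S &, forall p q, intersect p q} (intersecting S).
Proof.
apply: (iffP forallP) => [intS p q pS qS | intS p].
  by have /implyP/(_ pS)/forallP/(_ q)/implyP := intS p; apply.
by apply/implyP => pS; apply/forall_inP => q qS; apply: intS.
Qed.

Lemma intersecting_imset (X T : finType) (f : X -> {perm T}) (A : {set X}) :
  {in A &, forall a b, intersect (f a) (f b)} -> intersecting (f @: A).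
Proof.
move=> intA; apply/intersectingP => _ _ /imsetP [a aA ->] /imsetP [b bA ->].
exact: intA.
Qed.

Lemma card_le_mul_fibers (X K : finType) (f : X -> K) (A : {set X})
    (B : {set K}) b :
  f @: A \subset B -> (forall k, #|[set x in A | f x == k]| <= b) ->
  #|A| <= #|B| * b.
Proof.
move=> fAB fib_b.
rewrite -sum1_card (partition_big f (mem B)) /=; last first.
  by move=> x xA; apply: (subsetP fAB); apply: imset_f.
rewrite -sum_nat_const; apply: leq_sum => k _.
rewrite sum1_card; apply: leq_trans (fib_b k).
by apply: subset_leq_card; apply/subsetP => x; rewrite !inE.
Qed.

Definition ffam (I T : finType) (F : I -> {set T}) : {set {ffun I -> T}} :=
  [set g : {ffun I -> T} | [forall j, g j \in F j]].

Lemma in_ffam (I T : finType) (F : I -> {set T}) (g : {ffun I -> T}) :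
  (g \in ffam F) = [forall j, g j \in F j].
Proof. by rewrite inE. Qed.

Lemma card_ffam (I T : finType) (F : I -> {set T}) :
  #|ffam F| = \prod_j #|F j|.
Proof.
rewrite (@eq_card _ _ (family (fun j => mem (F j)))); last first.
  by move=> g; rewrite in_ffam; apply/forallP/familyP.
by rewrite card_family foldrE big_map big_enum.
Qed.

Lemma card_ffam_at (I T : finType) (j0 : I) (A B : {set T}) :
  #|ffam (fun j => if j == j0 then A else B)| = #|A| * #|B| ^ #|I|.-1.
Proof.
rewrite card_ffam (bigD1 j0) //= eqxx -(cardC1 j0) -prod_nat_const.
by congr (_ * _); apply: eq_bigr => j /negbTE ->.
Qed.

Section Wreath.

Variables (m n : nat).
Implicit Types (G : {set {perm 'I_m}}) (H : {set {perm 'I_n}}).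
Implicit Types (g : {ffun 'I_n -> {perm 'I_m}}) (h : {perm 'I_n}).

Definition wr_pair (gh : {ffun 'I_n -> {perm 'I_m}} * {perm 'I_n}) :=
  wr_elt gh.1 gh.2.

Lemma wr_eltE g h x j : wr_elt g h (x, j) = (g j x, h j).
Proof. by rewrite permE. Qed.

Lemma wr_pair_inj : 'I_m -> injective wr_pair.
Proof.
move=> x0 [g h] [g' h'] /= E.
rewrite /wr_pair /= in E.
have E' x j : (g j x, h j) = (g' j x, h' j) by rewrite -!wr_eltE E.
congr (_, _); last by apply/permP => j; case: (E' x0 j).
by apply/ffunP => j; apply/permP => x; case: (E' x j).
Qed.

Lemma intersect_wr_eltP g h g' h' :
  intersect (wr_elt g h) (wr_elt g' h') ->
  exists x j, g j x = g' j x /\ h j = h' j.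
Proof.
by rewrite intersectE => /existsP [[x j]]; rewrite !wr_eltE => /eqP [? ?]; exists x, j.
Qed.

Lemma intersect_wr_elt_top g h g' h' :
  intersect (wr_elt g h) (wr_elt g' h') -> intersect h h'.
Proof.
move=> /intersect_wr_eltP [_ [j [_ e]]].
by rewrite intersectE; apply/existsP; exists j; rewrite e.
Qed.

Lemma card_wreath_stab_ge G H x j :
  #|'C_G[x | 'P]| * #|G| ^ n.-1 * #|'C_H[j | 'P]| <=
  #|'C_(wreath G H)[(x, j) | 'P]|.
Proof.
set Gx := ffam (fun i => if i == j then 'C_G[x | 'P] else G).
have cardGx : #|Gx| = #|'C_G[x | 'P]| * #|G| ^ n.-1.
  by rewrite card_ffam_at card_ord.
rewrite -cardGx -cardsX.
rewrite -(card_in_imset (in2W (wr_pair_inj x))).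
apply: subset_leq_card; apply/subsetP => _ /imsetP [[g h] /setXP [gGx hHj] ->].
move: gGx hHj; rewrite in_ffam !in_stab_perm => /forallP gGx /andP [hH /eqP hj].
have := gGx j; rewrite eqxx in_stab_perm => /andP [_ /eqP gjx].
rewrite wr_eltE hj gjx eqxx andbT; apply: imset2_f => //.
rewrite in_ffam; apply/forallP => i.
by have := gGx i; case: eqP => // _; rewrite in_stab_perm => /andP [].
Qed.

Lemma max_stab_wreath_ge G H :
  max_stab G * #|G| ^ n.-1 * max_stab H <= max_stab (wreath G H).
Proof.
have [-> // | [x ->]] := max_stab_cases G.
have [-> | [j ->]] := max_stab_cases H; first by rewrite muln0.
exact: leq_trans (card_wreath_stab_ge G H x j) (leq_bigmax (x, j)).
Qed.

Variable j0 : 'I_n.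

Definition wr_ratio g : {ffun 'I_n -> {perm 'I_m}} :=
  [ffun j => (g j * (g j0)^-1)%g].

Lemma wr_ratioK g j : (wr_ratio g j * g j0)%g = g j.
Proof. by rewrite ffunE mulgKV. Qed.

Lemma wr_ratio_inj g g' : wr_ratio g = wr_ratio g' -> g j0 = g' j0 -> g = g'.
Proof.
by move=> er e0; apply/ffunP => j; rewrite -(wr_ratioK g) -(wr_ratioK g') er e0.
Qed.

Lemma intersect_wr_elt_base g h g' h' :
  wr_ratio g = wr_ratio g' -> intersect (wr_elt g h) (wr_elt g' h') ->
  intersect (g j0) (g' j0).
Proof.
move=> er /intersect_wr_eltP [x [j [e _]]].
rewrite intersectE; apply/existsP; exists (wr_ratio g j x).
by rewrite -!permM {2}er !wr_ratioK e.
Qed.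

Definition wr_key (gh : {ffun 'I_n -> {perm 'I_m}} * {perm 'I_n}) :=
  (gh.2, wr_ratio gh.1).

Variables (G : {group {perm 'I_m}}) (H : {set {perm 'I_n}}).
Variable P : {set {ffun 'I_n -> {perm 'I_m}} * {perm 'I_n}}.
Hypothesis sP : P \subset setX (ffam (fun=> G)) H.
Hypothesis intP : {in P &, forall a b, intersect (wr_pair a) (wr_pair b)}.

Lemma lift_memP gh : gh \in P -> (forall j, gh.1 j \in G) /\ gh.2 \in H.
Proof. by move=> /(subsetP sP); rewrite inE in_ffam => /andP [/forallP]. Qed.

Lemma wr_key_sub :
  wr_key @: P \subset setX (snd @: P) (ffam (fun j => if j == j0 then [set 1%g] else G)).
Proof.
apply/subsetP => _ /imsetP [gh ghP ->]; rewrite inE /= (imset_f snd ghP) /=.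
rewrite in_ffam; apply/forallP => j; rewrite ffunE.
case: eqP => [->|_]; first by rewrite mulgV inE.
by have [gG _] := lift_memP ghP; rewrite groupM ?groupV ?gG.
Qed.

Lemma card_top_le : EKR H -> #|snd @: P| <= max_stab H.
Proof.
move=> EH; apply: EH.
  by apply/subsetP => _ /imsetP [gh /lift_memP [_ ?] ->].
apply: intersecting_imset => -[g h] [g' h'] ghP gh'P.
exact: intersect_wr_elt_top (intP ghP gh'P).
Qed.

Lemma card_wr_key_fiber_le kap :
  EKR G -> #|[set gh in P | wr_key gh == kap]| <= max_stab G.
Proof.
move=> EG; set F := [set gh in P | _].
have inF gh : gh \in F -> gh \in P /\ wr_key gh = kap.
  by rewrite inE => /andP [? /eqP].
have keyF a b : a \in F -> b \in F -> wr_key a = wr_key b.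
  by move=> /inF [_ ->] /inF [_ ->].
pose base (gh : {ffun 'I_n -> {perm 'I_m}} * {perm 'I_n}) := gh.1 j0.
rewrite -(@card_in_imset _ _ base); last first.
  move=> [g h] [g' h'] aF bF /= e0.
  by case: (keyF _ _ aF bF) => -> /wr_ratio_inj/(_ e0) ->.
apply: EG.
  by apply/subsetP => _ /imsetP [gh /inF [/lift_memP [gG _] _] ->]; apply: gG.
apply: intersecting_imset => -[g h] [g' h'] aF bF.
case: (keyF _ _ aF bF) => _ er.
exact: intersect_wr_elt_base er (intP (inF _ aF).1 (inF _ bF).1).
Qed.

Lemma card_lifts_le :
  EKR G -> EKR H -> #|P| <= max_stab G * #|G| ^ n.-1 * max_stab H.
Proof.
move=> EG EH.
apply: leq_trans (card_le_mul_fibers wr_key_sub (card_wr_key_fiber_le ^~ EG)) _.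
rewrite cardsX card_ffam_at cards1 mul1n card_ord.
apply: leq_trans (leq_mul (leq_mul (card_top_le EH) (leqnn _)) (leqnn _)) _.
by rewrite mulnC mulnA mulnAC.
Qed.

End Wreath.

Arguments wr_pair {m n} gh.

Theorem theorem25 (m n : nat) (G : {group {perm 'I_m}}) (H : {group {perm 'I_n}}) :
  EKR G -> EKR H -> EKR (wreath G H).
Proof.
move=> EG EH S sS /intersectingP intS.
have [-> | [w wS]] := set_0Vmem S; first by rewrite cards0.
have /existsP [[_ j0] _] := intS w w wS wS.
pose P := [set gh in setX (ffam (fun=> G)) H | wr_pair gh \in S].
have S_lifts : S \subset wr_pair @: P.
  apply/subsetP => _ /[dup] /(subsetP sS) /imset2P [g h gG hH ->] ghS.
  by apply/imsetP; exists (g, h); rewrite // inE ghS andbT; apply/setXP.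
apply: leq_trans (subset_leq_card S_lifts) _.
apply: leq_trans (leq_imset_card _ _) _.
apply: leq_trans (max_stab_wreath_ge G H).
apply: card_lifts_le => //; first by apply/subsetP => gh; rewrite inE => /andP [].
by move=> a b; rewrite !inE => /andP [_ aS] /andP [_ bS]; apply: intS.
Qed.
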